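(* Let $\Gamma=(V,E)$ be a finite connected graph and $\phi:V\to\mathbb{C}$ a solution of equation (1) with $\gamma:V\to\mathbb{R}$ satisfying $\gamma(x)<1$ for all $x\in V$. Let $n_0$ be the smallest vertex degree of $\Gamma$. Then for every $N>n_0$ there is no invariant embedded framework in $\mathbb{R}^N$ with underlying graph $\Gamma$, positions $x\mapsto\vec x$, invariance function $\gamma$, and $\phi(x)=P(\vec x)$ for all $x\in V$.
   Context: Equation (1) at a vertex $x$ of degree $n(x)$: $\frac{\gamma(x)}{n(x)}\big(\sum_{y\sim x}(\phi(y)-\phi(x))\big)^2=\sum_{y\sim x}(\phi(x)-\phi(y))^2$. A framework in $\mathbb{R}^N$ is a finite simple graph with a point $\vec x\in\mathbb{R}^N$ assigned to each vertex, edges being straight segments; it is embedded if distinct vertices have distinct positions and no two edges meet except at common endpoints. With $P(y_1,\dots,y_N)=y_1+iy_2$, the framework is invariant with invariance function $\gamma:V\to\mathbb{R}$ if for every orthogonal transformation $A$ of $\mathbb{R}^N$ the function $x\mapsto P(A\vec x)$ satisfies equation (1) at every vertex with this $\gamma$. *)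

(* Real numbers: an arbitrary real closed field R
   (the statement is purely algebraic/semialgebraic).  Complex numbers
   are represented as pairs (re, im) : R * R with the complex square
   written out explicitly. *)
From HB Require Import structures.
From mathcomp Require Import all_boot all_order all_algebra.
Set Implicit Arguments. Unset Strict Implicit. Unset Printing Implicit Defensive.
Import Order.TTheory GRing.Theory Num.Theory.
Local Open Scope ring_scope.

Section Defs.
Variable R : rcfType.

Definition csq (z : R * R) : R * R := (z.1 ^+ 2 - z.2 ^+ 2, 2 * z.1 * z.2).
Definition csub (z w : R * R) : R * R := (z.1 - w.1, z.2 - w.2).

Variable T : finType.
Variable e : rel T.

Definition simple_graph : Prop := symmetric e /\ irreflexive e.
Definition graph_connected : Prop := forall x y : T, connect e x y.

Definition deg (x : T) : nat := #|[pred y | e x y]|.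

Definition eq1 (gamma : T -> R) (phi : T -> R * R) (x : T) : Prop :=
  let S := (\sum_(y | e x y) ((phi y).1 - (phi x).1),
            \sum_(y | e x y) ((phi y).2 - (phi x).2)) in
  let c := gamma x / (deg x)%:R in
  (c * (csq S).1, c * (csq S).2)
  = (\sum_(y | e x y) (csq (csub (phi x) (phi y))).1,
     \sum_(y | e x y) (csq (csub (phi x) (phi y))).2).

(* k-th coordinate (0-based) of a row vector in R^N *)
Definition coord N (v : 'rV[R]_N) (k : nat) : R := \sum_(i < N | val i == k) v 0 i.

(* P(y_1,...,y_N) = y_1 + i y_2 *)
Definition Pmap N (v : 'rV[R]_N) : R * R := (coord v 0, coord v 1).

Definition orthogonal N (A : 'M[R]_N) : Prop := A *m A^T = 1%:M.

Definition embedded N (pos : T -> 'rV[R]_N) : Prop :=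
  injective pos /\
  forall (a b c d : T) (s t : R),
    e a b -> e c d -> ~ ((a = c /\ b = d) \/ (a = d /\ b = c)) ->
    0 <= s <= 1 -> 0 <= t <= 1 ->
    (1 - s) *: pos a + s *: pos b = (1 - t) *: pos c + t *: pos d ->
    exists u : T, (u = a \/ u = b) /\ (u = c \/ u = d) /\
                  (1 - s) *: pos a + s *: pos b = pos u.

Definition invariant_framework N (pos : T -> 'rV[R]_N) (gamma : T -> R) : Prop :=
  forall A : 'M[R]_N, orthogonal A ->
    forall x : T, eq1 gamma (fun v => Pmap (pos v *m A)) x.

End Defs.

From Pilot Require Import Defs.
From HB Require Import structures.
From mathcomp Require Import all_boot all_order all_algebra.
From mathcomp Require Import fingroup perm.
From mathcomp Require Import ring lra.
Import Order.TTheory GRing.Theory Num.Theory.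
Set Implicit Arguments. Unset Strict Implicit. Unset Printing Implicit Defensive.
Local Open Scope ring_scope.

(* Fix a vertex x of minimal degree n = n0 < N, write d_y = pos y - pos x for
   its edge vectors and W = sum_y d_y.  For an orthogonal A and a coordinate k,
   the real part of (1) for the moved framework pos *m A compares the
   "discrepancy" gamma(x)/n (W A)_k^2 - sum_y (d_y A)_k^2 of coordinates 0 and 1.
   Permuting coordinates, all N coordinates have the same discrepancy.  Since
   the n < N edges have a common unit normal u, some orthogonal H turns u into
   the k-th coordinate direction, where the discrepancy is plainly 0.  Summing
   over all coordinates (Parseval) yields the balance
       gamma(x)/n |W|^2 = sum_y |d_y|^2,
   while Cauchy-Schwarz gives |W|^2 <= n sum_y |d_y|^2 and sum_y |d_y|^2 > 0
   because positions are distinct.  With gamma(x) < 1 this is impossible.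
   (Equation (1) for phi itself is the case A = 1 of invariance, and only the
   existence of one vertex of degree n0 < N is needed.)
   The file develops the Euclidean inner product on row vectors, orthogonal
   reflections, the common normal, the discrepancy calculus, and finally the
   theorem. *)

Section EuclideanDot.
Variables (R : realFieldType) (N : nat).
Implicit Types (z w : 'rV[R]_N) (A : 'M[R]_N).

Definition dot z w : R := (z *m w^T) 0 0.

Lemma dotE z w : dot z w = \sum_i z 0 i * w 0 i.
Proof. by rewrite /dot mxE; apply: eq_bigr => i _; rewrite mxE. Qed.

Lemma dotC z w : dot z w = dot w z.
Proof. by rewrite !dotE; apply: eq_bigr => i _; rewrite mulrC. Qed.

Lemma dotBl z1 z2 w : dot (z1 - z2) w = dot z1 w - dot z2 w.
Proof. by rewrite /dot mulmxBl [LHS]mxE [X in _ + X]mxE. Qed.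

Lemma dotZl a z w : dot (a *: z) w = a * dot z w.
Proof. by rewrite /dot -scalemxAl [LHS]mxE. Qed.

Lemma dot_delta z k : dot z (delta_mx 0 k) = z 0 k.
Proof. by rewrite /dot trmx_delta -colE mxE. Qed.

Lemma dot_mulmx z w A : dot (z *m A) w = dot z (w *m A^T).
Proof. by rewrite /dot trmx_mul trmxK mulmxA. Qed.

Lemma dot_ge0 z : 0 <= dot z z.
Proof. by rewrite dotE; apply: sumr_ge0 => i _; rewrite -expr2 sqr_ge0. Qed.

Lemma dot_gt0 z : z != 0 -> 0 < dot z z.
Proof.
apply: contraNT; rewrite -leNgt => z_le0; apply/eqP/matrixP => i j.
have : dot z z == 0 by rewrite eq_le z_le0 dot_ge0.
rewrite dotE psumr_eq0 => [/allP/(_ j (mem_index_enum j))|k _]; last first.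
  by rewrite -expr2 sqr_ge0.
by rewrite (ord1 i) !mxE mulf_eq0 orbb => /eqP.
Qed.
End EuclideanDot.

(* Cauchy-Schwarz for a finite sum: (sum a)^2 <= n * sum a^2, obtained from
   the nonnegativity of sum_(y,z) (a y - a z)^2 = 2 (n * sum a^2 - (sum a)^2). *)
Lemma sqr_sum_le (R : realFieldType) (T : finType) (P : pred T) (a : T -> R) :
  (\sum_(y | P y) a y) ^+ 2 <= #|P|%:R * \sum_(y | P y) a y ^+ 2.
Proof.
set S := \sum_(y | P y) a y; set S2 := \sum_(y | P y) a y ^+ 2.
have sum_const (c : R) : \sum_(y | P y) c = c * #|P|%:R.
  by rewrite sumr_const mulr_natr.
have pair_sum : \sum_(y | P y) \sum_(z | P z) (a y - a z) ^+ 2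
                = (#|P|%:R * S2 - S ^+ 2) *+ 2.
  have -> : \sum_(y | P y) \sum_(z | P z) (a y - a z) ^+ 2
      = \sum_(y | P y) (a y ^+ 2 * #|P|%:R + S2 - 2 * a y * S).
    apply: eq_bigr => y _.
    rewrite /S /S2 -sum_const mulr_sumr -big_split -sumrB /=.
    by apply: eq_bigr => z _; ring.
  rewrite sumrB big_split /= -mulr_suml sum_const -mulr_suml -mulr_sumr -/S -/S2.
  ring.
have : 0 <= (#|P|%:R * S2 - S ^+ 2) *+ 2.
  by rewrite -pair_sum; do 2!apply: sumr_ge0 => ? _; exact: sqr_ge0.
by rewrite pmulrn_lge0 // subr_ge0.
Qed.

Lemma dot_sum_le (R : realFieldType) N (T : finType) (P : pred T)
    (d : T -> 'rV[R]_N) :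
  dot (\sum_(y | P y) d y) (\sum_(y | P y) d y)
    <= #|P|%:R * \sum_(y | P y) dot (d y) (d y).
Proof.
under [in leRHS]eq_bigr do rewrite dotE.
rewrite dotE exchange_big mulr_sumr /=; apply: ler_sum => i _.
rewrite -expr2 summxE; under [X in _ <= _ * X]eq_bigr do rewrite -expr2.
exact: sqr_sum_le.
Qed.

Section Orthogonal.
Variables (R : rcfType) (N : nat).
Implicit Types (z a b : 'rV[R]_N) (H : 'M[R]_N).

Lemma orthogonal_dot H z : Defs.orthogonal H -> dot (z *m H) (z *m H) = dot z z.
Proof. by move=> HHt; rewrite dot_mulmx -mulmxA HHt mulmx1. Qed.

Lemma orthogonal_perm H (s : 'S_N) :
  Defs.orthogonal H -> Defs.orthogonal (H *m perm_mx s).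
Proof.
rewrite /Defs.orthogonal => HHt.
by rewrite trmx_mul tr_perm_mx mulmxA -(mulmxA H) -perm_mxM mulgV perm_mx1 mulmx1.
Qed.

(* Two vectors of the same length are exchanged by a symmetric orthogonal map:
   the identity if they agree, otherwise the reflection in the hyperplane
   orthogonal to their difference. *)
Lemma reflection_exchange a b : dot a a = dot b b ->
  exists2 H, Defs.orthogonal H & H^T = H /\ a *m H = b.
Proof.
move=> same_len; have [<-|neq_ab] := eqVneq a b.
  by exists 1%:M; rewrite /Defs.orthogonal ?trmx1 ?mulmx1.
set v := a - b; set s := dot v v; set B := v^T *m v.
have s_gt0 : 0 < s by rewrite dot_gt0 // subr_eq0.
have BB : B *m B = s *: B.
  by rewrite mulmxA -(mulmxA v^T) [v *m v^T]mx11_scalar mul_mx_scalar -scalemxAl.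
have symB : B^T = B by rewrite trmx_mul trmxK.
have symH : (1%:M - (2 / s) *: B)^T = 1%:M - (2 / s) *: B.
  by rewrite linearB /= trmx1 linearZ /= symB.
exists (1%:M - (2 / s) *: B); last split=> //.
  rewrite /Defs.orthogonal symH mulmxBl !mulmxBr !mul1mx mulmx1.
  rewrite -scalemxAl -scalemxAr BB !scalerA.
  have -> : 2 / s * (2 / s) * s = 2 / s + 2 / s by field; rewrite gt_eqF.
  by rewrite scalerDl opprB addrK subrK.
have av : dot a v = s / 2.
  rewrite /s /v dotC !dotBl !(dotC _ (a - b)) !dotBl (dotC b a) same_len.
  by field.
rewrite mulmxBr mulmx1 -scalemxAr mulmxA [a *m v^T]mx11_scalar mul_scalar_mx.
rewrite -/(dot a v) av scalerA.
have -> : 2 / s * (s / 2) = 1 by field; rewrite gt_eqF.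
by rewrite scale1r /v opprB addrC subrK.
Qed.

Lemma orthogonal_coordinate (u : 'rV[R]_N) (k : 'I_N) : u != 0 ->
  exists2 H, Defs.orthogonal H &
    forall z, (z *m H) 0 k = (Num.sqrt (dot u u))^-1 * dot z u.
Proof.
move=> u_neq0; set r := Num.sqrt (dot u u).
have r_neq0 : r != 0 by rewrite sqrtr_eq0 -ltNge dot_gt0.
have unit_u : dot (r^-1 *: u) (r^-1 *: u) = 1.
  rewrite dotZl dotC dotZl -[dot u u]sqr_sqrtr ?dot_ge0 // -/r.
  by field.
have unit_e : dot (delta_mx 0 k) (delta_mx 0 k) = 1 :> R.
  by rewrite dot_delta mxE !eqxx.
have [H orthH [symH eH]] := reflection_exchange (etrans unit_e (esym unit_u)).
exists H => // z.
by rewrite -dot_delta dot_mulmx symH eH dotC dotZl dotC.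
Qed.
End Orthogonal.

(* A matrix of rank < N has a nonzero vector in its left kernel: take a nonzero
   row of kermx M. *)
Lemma left_kernel_vector (F : fieldType) N n (M : 'M[F]_(N, n)) :
  (\rank M < N)%N -> exists2 u : 'rV_N, u != 0 & u *m M = 0.
Proof.
move=> rank_lt; have ker_neq0 : kermx M != 0.
  by rewrite -mxrank_eq0 mxrank_ker subn_eq0 -ltnNge.
have [i row_neq0 | all_rows0] := pickP (fun i => row i (kermx M) != 0).
  by exists (row i (kermx M)); rewrite // -row_mul mulmx_ker row0.
case/eqP: ker_neq0; apply/row_matrixP => i; rewrite row0.
by have /negbFE/eqP := all_rows0 i.
Qed.

Lemma common_normal (R : realFieldType) N (T : finType) (P : {pred T})
    (d : T -> 'rV[R]_N) :
  (#|P| < N)%N -> exists2 u, u != 0 & forall y, y \in P -> dot (d y) u = 0.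
Proof.
move=> card_lt; pose D : 'M[R]_(#|P|, N) := \matrix_i d (enum_val i).
have [|u u_neq0 uD] := @left_kernel_vector _ _ _ D^T.
  by rewrite mxrank_tr; apply: leq_ltn_trans (rank_leq_row D) card_lt.
exists u => // y Py; rewrite dotC.
have := congr1 (fun M : 'rV_#|P| => M 0 (enum_rank_in Py y)) uD.
rewrite !mxE => <-; rewrite dotE; apply: eq_bigr => j _.
by rewrite !mxE enum_rankK_in.
Qed.

Section EdgeVectors.
Variables (R : realFieldType) (T : finType) (e : rel T) (N : nat).
Variable pos : T -> 'rV[R]_N.

Definition edge (x y : T) : 'rV[R]_N := pos y - pos x.
Definition star (x : T) : 'rV[R]_N := \sum_(y | e x y) edge x y.
End EdgeVectors.

Section Discrepancy.
Variables (R : rcfType) (T : finType) (e : rel T) (gamma : T -> R).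

(* The real part of equation (1) at x for a real function f on the vertices:
   gamma(x)/n(x) (sum_y (f y - f x))^2 - sum_y (f y - f x)^2. *)
Definition discrepancy (f : T -> R) (x : T) : R :=
  gamma x / (deg e x)%:R * (\sum_(y | e x y) (f y - f x)) ^+ 2
  - \sum_(y | e x y) (f y - f x) ^+ 2.

Lemma eq_discrepancy (f g : T -> R) x :
  f =1 g -> discrepancy f x = discrepancy g x.
Proof.
by move=> fg; rewrite /discrepancy; under eq_bigr do rewrite !fg;
  under [X in _ - X]eq_bigr do rewrite !fg.
Qed.

(* Taking real parts in (1): the real and imaginary parts of a solution have
   the same discrepancy. *)
Lemma eq1_discrepancy (phi : T -> R * R) x : eq1 e gamma phi x ->
  discrepancy (fun y => (phi y).1) x = discrepancy (fun y => (phi y).2) x.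
Proof.
rewrite /discrepancy => /(congr1 fst) /=.
have -> : \sum_(y | e x y)
      (((phi x).1 - (phi y).1) ^+ 2 - ((phi x).2 - (phi y).2) ^+ 2)
  = \sum_(y | e x y) ((phi y).1 - (phi x).1) ^+ 2
    - \sum_(y | e x y) ((phi y).2 - (phi x).2) ^+ 2.
  by rewrite -sumrB; apply: eq_bigr => y _; ring.
lra.
Qed.

Variables (N : nat) (pos : T -> 'rV[R]_N).

Definition moved_coord (A : 'M[R]_N) (k : 'I_N) (y : T) : R := (pos y *m A) 0 k.

Lemma moved_coordB A k x y :
  moved_coord A k y - moved_coord A k x = (edge pos x y *m A) 0 k.
Proof. by rewrite /moved_coord /edge mulmxBl !mxE. Qed.

Lemma moved_coord_perm A (s : 'S_N) j :
  moved_coord (A *m perm_mx s) j =1 moved_coord A ((s^-1)%g j).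
Proof.
move=> y; rewrite /moved_coord mulmxA.
by have := col_permE (s^-1)%g (pos y *m A); rewrite invgK => <-; rewrite mxE.
Qed.

Lemma coordE (v : 'rV[R]_N) k (i : 'I_N) : val i = k -> Defs.coord v k = v 0 i.
Proof. by move=> <-; rewrite /Defs.coord (big_pred1 i). Qed.

Lemma discrepancy_sum H x : Defs.orthogonal H ->
  \sum_k discrepancy (moved_coord H k) x
  = gamma x / (deg e x)%:R * dot (star e pos x) (star e pos x)
    - \sum_(y | e x y) dot (edge pos x y) (edge pos x y).
Proof.
move=> orthH; rewrite sumrB -mulr_sumr exchange_big /=.
rewrite -(orthogonal_dot _ orthH) dotE.
under [in RHS]eq_bigr => y _ do rewrite -(orthogonal_dot _ orthH) dotE.
congr (_ * _ - _); first apply: eq_bigr => k _.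
  by rewrite -expr2 mulmx_suml summxE; congr (_ ^+ 2); apply: eq_bigr => y _;
     rewrite moved_coordB.
by apply: eq_bigr => y _; apply: eq_bigr => k _; rewrite moved_coordB expr2.
Qed.

Hypothesis invariant : invariant_framework e pos gamma.
Variables (k0 k1 : 'I_N).
Hypotheses (k0E : val k0 = 0%N) (k1E : val k1 = 1%N).

Lemma invariant_discrepancy A x : Defs.orthogonal A ->
  discrepancy (moved_coord A k0) x = discrepancy (moved_coord A k1) x.
Proof.
move=> orthA; have := eq1_discrepancy (invariant orthA x).
rewrite (eq_discrepancy _ (fun y => coordE (pos y *m A) k0E)).
by rewrite (eq_discrepancy _ (fun y => coordE (pos y *m A) k1E)).
Qed.

(* Composing with the transposition (k0 k) moves coordinate k into position 0
   while fixing position 1: hence all coordinates have the same discrepancy. *)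
Lemma invariant_discrepancy_const H x k : Defs.orthogonal H ->
  discrepancy (moved_coord H k) x = discrepancy (moved_coord H k1) x.
Proof.
move=> orthH; have [->//|k_neq_k1] := eqVneq k k1.
have k0_neq_k1 : k1 != k0 by apply/eqP => /(congr1 val); rewrite k0E k1E.
have := invariant_discrepancy x (orthogonal_perm (tperm k0 k) orthH).
rewrite !(eq_discrepancy _ (moved_coord_perm _ _ _)) !tpermV tpermL tpermD //.
by rewrite eq_sym.
Qed.
End Discrepancy.

(* At a vertex of degree < N of an invariant framework, the common normal u of
   the edges becomes a coordinate direction on which every edge projects to 0;
   that coordinate has discrepancy 0, hence so do all, and summing them gives
   the balance gamma(x)/n(x) |W|^2 = sum_y |d_y|^2. *)
Lemma star_balance (R : rcfType) (T : finType) (e : rel T) (gamma : T -> R) N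
    (pos : T -> 'rV[R]_N) x :
  invariant_framework e pos gamma -> (deg e x < N)%N -> (1 < N)%N ->
  gamma x / (deg e x)%:R * dot (star e pos x) (star e pos x)
  = \sum_(y | e x y) dot (edge pos x y) (edge pos x y).
Proof.
move=> invariant deg_lt N_gt1.
pose k0 : 'I_N := Ordinal (ltnW N_gt1); pose k1 : 'I_N := Ordinal N_gt1.
have [u u_neq0 u_normal] := common_normal (edge pos x) deg_lt.
have [H orthH Hk1] := orthogonal_coordinate k1 u_neq0.
have disc_k1 : discrepancy e gamma (moved_coord pos H k1) x = 0.
  have edge_k1 y : e x y -> moved_coord pos H k1 y - moved_coord pos H k1 x = 0.
    by move=> xy; rewrite moved_coordB Hk1 u_normal ?mulr0.
  by rewrite /discrepancy !big1 => [|y /edge_k1 ->|y /edge_k1 ->];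
    rewrite ?expr0n /= ?mulr0 ?subr0.
have := discrepancy_sum e gamma pos x orthH.
rewrite big1 => [|k _]; first by move/eqP; rewrite eq_sym subr_eq0 => /eqP.
by rewrite (invariant_discrepancy_const invariant (k0 := k0) (k1 := k1)).
Qed.

Lemma subunit_balance_lt (R : realFieldType) (g n w D : R) :
  g < 1 -> 0 < n -> 0 < D -> 0 <= w -> w <= n * D -> g / n * w < D.
Proof.
move=> g_lt1 n_gt0 D_gt0 w_ge0 w_le; rewrite mulrAC ltr_pdivrMr // [D * n]mulrC.
have [->|w_neq0] := eqVneq w 0; first by rewrite mulr0 mulr_gt0.
by apply: lt_le_trans w_le; rewrite gtr_pMl // lt0r w_neq0.
Qed.

Lemma connected_neighbour (T : finType) (e : rel T) :
  graph_connected e -> (1 < #|T|)%N -> forall x, exists y, e x y.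
Proof.
move=> conn /card_gt1P [a [b [_ _ a_neq_b]]] x.
have [z z_neq_x] : exists z, z != x.
  by have [<-|] := eqVneq a x; [exists b; rewrite eq_sym | exists a].
case/connectP: (conn x z) => [[/= _ z_eq_x|y p /= /andP [x_y _] _]].
  by rewrite z_eq_x eqxx in z_neq_x.
by exists y.
Qed.

Lemma edge_energy_gt0 (R : realFieldType) (T : finType) (e : rel T) N
    (pos : T -> 'rV[R]_N) x y0 :
  injective pos -> irreflexive e -> e x y0 ->
  0 < \sum_(y | e x y) dot (edge pos x y) (edge pos x y).
Proof.
move=> inj_pos irr_e x_y0; rewrite (bigD1 y0) //=.
apply: ltr_pwDl; last by apply: sumr_ge0 => y _; exact: dot_ge0.
rewrite dot_gt0 // subr_eq0; apply: contraTneq x_y0 => /inj_pos ->.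
by rewrite irr_e.
Qed.

Theorem lemma5p5 (R : rcfType) (T : finType) (e : rel T)
    (gamma : T -> R) (phi : T -> R * R) (n0 : nat) :
  simple_graph e -> graph_connected e -> (1 < #|T|)%N ->
  (forall x : T, eq1 e gamma phi x) ->
  (forall x : T, gamma x < 1) ->
  (exists x : T, deg e x = n0) -> (forall x : T, (n0 <= deg e x)%N) ->
  forall (N : nat), (n0 < N)%N ->
  ~ (exists pos : T -> 'rV[R]_N,
       embedded e pos /\ invariant_framework e pos gamma /\
       (forall x : T, phi x = Pmap (pos x))).
Proof.
move=> [_ irr_e] conn card_gt1 _ gamma_lt1 [x <-] _ N deg_lt.
move=> [pos [[inj_pos _] [invariant _]]].
have [y0 x_y0] := connected_neighbour conn card_gt1 x.
have deg_gt0 : (0 < deg e x)%N by apply/card_gt0P; exists y0.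
have deg_gt0R : 0 < (deg e x)%:R :> R by rewrite ltr0n.
have balance := star_balance invariant deg_lt (leq_ltn_trans deg_gt0 deg_lt).
have cauchy_schwarz : dot (star e pos x) (star e pos x)
    <= (deg e x)%:R * \sum_(y | e x y) dot (edge pos x y) (edge pos x y).
  exact: (dot_sum_le [pred y | e x y]).
have := subunit_balance_lt (gamma_lt1 x) deg_gt0R
  (edge_energy_gt0 inj_pos irr_e x_y0) (dot_ge0 _) cauchy_schwarz.
by rewrite balance ltxx.
Qed.
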